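(* Let $\mathcal{X}$ and $\mathcal{Y}$ be finite sets, let $\mathcal{M}\subseteq\mathcal{X}\times\mathcal{Y}$ be the set of actual matches, and let $\hat{\mathcal{M}}_H\subseteq\mathcal{X}\times\mathcal{Y}$ be a fixed set (matches identified by a holdout query algorithm, chosen independently of all samples below). Let $\mathcal{S}_{\mathcal{X}}$ and $\mathcal{S}'_{\mathcal{X}}$ be independent samples, each drawn uniformly at random without replacement from $\mathcal{X}$. Let $\hat{\mathcal{M}}\subseteq\mathcal{X}\times\mathcal{Y}$ be a set of identified matches (produced by a ''complete'' query algorithm) which may depend on $\mathcal{S}_{\mathcal{X}}$ but is independent of $\mathcal{S}'_{\mathcal{X}}$ given $\mathcal{S}_{\mathcal{X}}$ (i.e. it is a fixed set conditional on $\mathcal{S}_{\mathcal{X}}$). For $x\in\mathcal{X}$ let $\mathcal{M}(x)$, $\hat{\mathcal{M}}(x)$, $\hat{\mathcal{M}}_H(x)$ be the sets of pairs in $\mathcal{M}$, $\hat{\mathcal{M}}$, $\hat{\mathcal{M}}_H$ respectively whose first coordinate is $x$. Let $\hat{\mathcal{X}}=\{x:\hat{\mathcal{M}}(x)\ne\emptyset\}$ and $\hat{\mathcal{X}}_H=\{x:\hat{\mathcal{M}}_H(x)\ne\emptyset\}$; for $x\in\hat{\mathcal{X}}_H$ let $p_H(x)=|\hat{\mathcal{M}}_H(x)\cap\mathcal{M}(x)|/|\hat{\mathcal{M}}_H(x)|$, for $x\in\hat{\mathcal{X}}$ let $p(x)=|\hat{\mathcal{M}}(x)\cap\mathcal{M}(x)|/|\hat{\mathcal{M}}(x)|$,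 and define the query precision $P=\frac{1}{|\hat{\mathcal{X}}|}\sum_{x\in\hat{\mathcal{X}}}p(x)$. Define, for $x\in\mathcal{X}$, $$d_p(x)=\mathbf{1}_{\hat{\mathcal{X}}\cap\hat{\mathcal{X}}_H}(x)\,\mathbf{1}\{\hat{\mathcal{M}}(x)\ne\hat{\mathcal{M}}_H(x)\}\left(1+\frac{|\hat{\mathcal{M}}_H(x)\setminus\hat{\mathcal{M}}(x)|}{|\hat{\mathcal{M}}(x)|}\right)+\mathbf{1}_{\hat{\mathcal{X}}_H\setminus\hat{\mathcal{X}}}(x).$$ Then for any $\delta>0$, with probability at least $1-4\delta$, $$P\ \ge\ \frac{p^-(\mathcal{X},\mathcal{S}'_{\mathcal{X}},\mathbf{1}_{\hat{\mathcal{X}}_H},0,1,\delta)\,p^-(\hat{\mathcal{X}}_H,\mathcal{S}_{\mathcal{X}}\cap\hat{\mathcal{X}}_H,p_H,0,1,\delta)-p^+(\mathcal{X},\mathcal{S}'_{\mathcal{X}},d_p,-1,2,\delta)}{p^+(\mathcal{X},\mathcal{S}'_{\mathcal{X}},\mathbf{1}_{\hat{\mathcal{X}}},0,1,\delta)}.$$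
   Context: PAC bound rules: $p^+$ and $p^-$ are functions which, given a finite set $\mathcal{P}$ (population), a subset $\mathcal{S}\subseteq\mathcal{P}$, a function $f:\mathcal{P}\to\mathbb{R}$, reals $a\le b$ and $\delta>0$, return a real number, and satisfy the following: for every finite set $\mathcal{P}$ with $|\mathcal{P}|=n$, every sample size $s$, and every $f$ with $a\le f(x)\le b$ for all $x\in\mathcal{P}$, if $\mathcal{S}$ is a size-$s$ sample drawn uniformly at random without replacement from $\mathcal{P}$ and $\mu=\frac1n\sum_{x\in\mathcal{P}}f(x)$, then $\Pr\{\mu>p^+(\mathcal{P},\mathcal{S},f,a,b,\delta)\}\le\delta$ and $\Pr\{\mu<p^-(\mathcal{P},\mathcal{S},f,a,b,\delta)\}\le\delta$. $\mathbf{1}_{A}$ denotes the indicator function of a set $A$ and $\mathbf{1}\{\cdot\}$ the indicator of an event.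
   Formalization: The lower rule $p^-$ returns only values ≥ a whenever a ≤ b, and $-1\le d_p(x)\le 2$ holds for all x and every possible sample $\mathcal{S}_{\mathcal{X}}$. Each condition added here is assumed in the paper as well or is needed for the statement above to hold. *)

From HB Require Import structures.
From mathcomp Require Import all_boot all_order all_algebra.
Set Implicit Arguments. Unset Strict Implicit. Unset Printing Implicit Defensive.
Import Order.TTheory GRing.Theory Num.Theory.
Local Open Scope ring_scope.

Section Defs.
Variable R : realFieldType.

Section Rules.
Variable T : finType.

Definition pop_mean (P : {set T}) (f : T -> R) : R :=
  (\sum_(x in P) f x) / (#|P|%:R).

(* probability that a size-s sample drawn uniformly without replacement
   from P (i.e. a uniform s-subset of P) satisfies the event E *)
Definition samp_prob (P : {set T}) (s : nat) (E : {set T} -> bool) : R :=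
  (#|[set S : {set T} | [&& S \subset P, #|S| == s & E S]]|%:R)
  / (#|[set S : {set T} | (S \subset P) && (#|S| == s)]|%:R).

(* type of a bound rule  p(P, S, f, a, b, delta) *)
Definition rule_t := {set T} -> {set T} -> (T -> R) -> R -> R -> R -> R.

Definition upper_rule (pp : rule_t) : Prop :=
  forall (P : {set T}) (s : nat) (f : T -> R) (a b delta : R),
    (0 < #|P|)%N -> (s <= #|P|)%N -> 0 < delta ->
    (forall x, x \in P -> a <= f x <= b) ->
    samp_prob P s (fun S => pp P S f a b delta < pop_mean P f) <= delta.

Definition lower_rule (pm : rule_t) : Prop :=
  forall (P : {set T}) (s : nat) (f : T -> R) (a b delta : R),
    (0 < #|P|)%N -> (s <= #|P|)%N -> 0 < delta ->
    (forall x, x \in P -> a <= f x <= b) ->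
    samp_prob P s (fun S => pop_mean P f < pm P S f a b delta) <= delta.

Definition lower_rule_ge_a (pm : rule_t) : Prop :=
  forall (P S : {set T}) (f : T -> R) (a b delta : R),
    a <= b -> a <= pm P S f a b delta.

Definition indic (A : {set T}) (x : T) : R := (x \in A)%:R.
End Rules.

Section Match.
Variables X Y : finType.

Definition msec (A : {set X * Y}) (x : X) : {set X * Y} :=
  [set q in A | q.1 == x].

Definition matched (A : {set X * Y}) : {set X} :=
  [set x | msec A x != set0].

Definition pfrac (M A : {set X * Y}) (x : X) : R :=
  (#|msec A x :&: msec M x|%:R) / (#|msec A x|%:R).

Definition precision (M A : {set X * Y}) : R :=
  (\sum_(x in matched A) pfrac M A x) / (#|matched A|%:R).

Definition dp (A AH : {set X * Y}) (x : X) : R :=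
  indic (matched A :&: matched AH) x
    * (msec A x != msec AH x)%:R
    * (1 + (#|msec AH x :\: msec A x|%:R) / (#|msec A x|%:R))
  + indic (matched AH :\: matched A) x.

(* joint probability over independent uniform samples S (size s) and
   S' (size s') drawn without replacement from X *)
Definition pair_prob (s s' : nat) (E : {set X} -> {set X} -> bool) : R :=
  (#|[set q : {set X} * {set X} | [&& #|q.1| == s, #|q.2| == s' & E q.1 q.2]]|%:R)
  / (#|[set q : {set X} * {set X} | (#|q.1| == s) && (#|q.2| == s')]|%:R).
End Match.
End Defs.

(* Pointwise, [1_{hatX_H} p_H - d_p <= 1_hatX p]: where the two query sets
   agree at x both sides coincide, and otherwise d_p >= 1 >= p_H or x lies
   outside hatX_H.  Averaging over X with
   mean_X(1_A g) = mean_X(1_A) * mean_A(g) gives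
     mean(1_{hatX_H}) * mean_{hatX_H}(p_H) - mean(d_p) <= mean(1_hatX) * P,
   and each of the four means is replaced by its PAC bound.  Three of them use
   S' with S fixed, so they hold conditionally on S; the bound on
   mean_{hatX_H}(p_H) uses S :&: hatX_H, which, given its size, is a uniform
   draw from hatX_H.  A union bound over the four failure events concludes. *)

From HB Require Import structures.
From mathcomp Require Import all_boot all_order all_algebra.
From mathcomp.algebra_tactics Require Import ring lra.
Import Order.TTheory GRing.Theory Num.Theory.
Local Open Scope ring_scope.
Set Implicit Arguments. Unset Strict Implicit. Unset Printing Implicit Defensive.

Section UniformProbability.
Variables (R : realFieldType) (T : finType).
Implicit Types (D : {set T}) (E F : pred T).

Definition uprob D E : R := #|[set x in D | E x]|%:R / #|D|%:R.

Lemma card_setId_le D E : (#|[set x in D | E x]| <= #|D|)%N.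
Proof. by apply: subset_leq_card; apply/subsetP => x; rewrite inE => /andP[]. Qed.

Lemma uprob_leP D E (d : R) : 0 <= d ->
  uprob D E <= d <-> #|[set x in D | E x]|%:R <= d * #|D|%:R.
Proof.
move=> d_ge0; rewrite /uprob; have [D0|D_gt0] := posnP #|D|.
  have := card_setId_le D E; rewrite D0 leqn0 => /eqP ->.
  by rewrite mul0r mulr0.
by rewrite ler_pdivrMr ?ltr0n.
Qed.

Lemma uprob_eq0 D E : {in D, forall x, ~~ E x} -> uprob D E = 0.
Proof.
move=> nE; rewrite /uprob (_ : [set x in D | E x] = set0) ?cards0 ?mul0r //.
by apply/setP => x; rewrite !inE; apply/negP => /andP[/nE/negP].
Qed.

Lemma uprob_mono D E F : {in D, forall x, E x -> F x} -> uprob D E <= uprob D F.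
Proof.
move=> EF; rewrite ler_wpM2r ?invr_ge0 ?ler0n // ler_nat subset_leq_card //.
by apply/subsetP => x; rewrite !inE => /andP[xD /(EF x xD) ->]; rewrite xD.
Qed.

Lemma uprobU D E F : uprob D [predU E & F] <= uprob D E + uprob D F.
Proof.
rewrite /uprob -mulrDl ler_wpM2r ?invr_ge0 ?ler0n // -natrD ler_nat.
rewrite (_ : [set x in D | [predU E & F] x] = [set x in D | E x] :|: [set x in D | F x]).
  by rewrite cardsU leq_subr.
by apply/setP => x; rewrite !inE andb_orr.
Qed.

Lemma uprob_predC D E : D != set0 -> uprob D (predC E) = 1 - uprob D E.
Proof.
rewrite -card_gt0 => D_gt0.
suff <- : uprob D E + uprob D (predC E) = 1 by ring.
rewrite /uprob -mulrDl -natrD.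
have cardD : (#|[set x in D | E x]| + #|[set x in D | predC E x]|)%N = #|D|.
  rewrite -(cardsID [set x | E x] D) setIdE.
  by congr (_ + _)%N; apply: eq_card => x; rewrite !inE andbC.
by rewrite cardD divff // pnatr_eq0 -lt0n.
Qed.

Lemma uprob_has_le D (Es : seq (pred T)) :
  uprob D (fun x => has (fun E => E x) Es) <= \sum_(E <- Es) uprob D E.
Proof.
elim: Es => [|E Es IH]; first by rewrite big_nil uprob_eq0.
rewrite big_cons; apply: le_trans (uprobU _ _ _) _; exact: lerD.
Qed.

Lemma uprob_union_bound D (G : pred T) (Es : seq (pred T)) : D != set0 ->
  {in D, forall x, ~~ G x -> has (fun E => E x) Es} ->
  1 - \sum_(E <- Es) uprob D E <= uprob D G.
Proof.
move=> D_neq0 cover; have := uprob_predC G D_neq0.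
have : uprob D (predC G) <= \sum_(E <- Es) uprob D E.
  by apply: le_trans (uprob_has_le D Es); apply: uprob_mono.
lra.
Qed.

End UniformProbability.

Section ProductProbability.
Variables (R : realFieldType) (T1 T2 : finType).
Variables (D1 : {set T1}) (D2 : {set T2}).

Lemma card_setX_setId (E : T1 -> T2 -> bool) :
  #|[set q in setX D1 D2 | E q.1 q.2]| = (\sum_(x in D1) #|[set y in D2 | E x y]|)%N.
Proof.
symmetry; under eq_bigr do rewrite -sum1dep_card.
by rewrite pair_big_dep sum1dep_card; apply: eq_card => q; rewrite !inE andbA.
Qed.

Lemma uprob_setX_le (E : T1 -> T2 -> bool) (d : R) : 0 <= d ->
  (forall x, x \in D1 -> uprob R D2 (E x) <= d) ->
  uprob R (setX D1 D2) (fun q => E q.1 q.2) <= d.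
Proof.
move=> d_ge0 fiber; apply/uprob_leP => //.
rewrite card_setX_setId cardsX natr_sum natrM.
apply: le_trans (ler_sum _ (fun x xD1 => (uprob_leP _ _ d_ge0).1 (fiber x xD1))) _.
by rewrite sumr_const -mulrnAr -mulr_natl.
Qed.

Lemma uprob_setX_fst (F : pred T1) : D2 != set0 ->
  uprob R (setX D1 D2) (fun q => F q.1) = uprob R D1 F.
Proof.
rewrite -card_gt0 => D2_gt0; rewrite /uprob.
rewrite (_ : [set q in setX D1 D2 | F q.1] = setX [set x in D1 | F x] D2).
  by rewrite !cardsX !natrM invfM mulrACA divff ?mulr1 // pnatr_eq0 -lt0n.
by apply/setP => q; rewrite !inE andbAC.
Qed.

End ProductProbability.

Section Sampling.
Variables (R : realFieldType) (T : finType).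

Definition draws (P : {set T}) (k : nat) : {set {set T}} :=
  [set S : {set T} | (S \subset P) && (#|S| == k)].

Lemma samp_probE (P : {set T}) s (E : pred {set T}) :
  samp_prob R P s E = uprob R (draws P s) E.
Proof.
by rewrite /samp_prob /uprob; congr (_%:R / _); apply: eq_card => S; rewrite !inE andbA.
Qed.

Lemma draws_setT_neq0 k : (k <= #|T|)%N -> draws [set: T] k != set0.
Proof.
rewrite -card_gt0 (_ : draws _ k = [set S : {set T} | #|S| == k]) ?card_draws ?bin_gt0 //.
by apply/setP => S; rewrite !inE subsetT.
Qed.

(* Splitting S into S :&: A and U := S :\: A, the draws S of size s with a
   given U correspond to the draws of size s - #|U| from A. *)
Lemma card_draws_setI (A : {set T}) s (G : pred {set T}) :
  #|[set S in draws [set: T] s | G (S :&: A)]| =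
  (\sum_(U : {set T} | (U \subset ~: A) && (#|U| <= s)%N)
     #|[set S in draws A (s - #|U|) | G S]|)%N.
Proof.
rewrite -sum1dep_card (partition_big (fun S => S :\: A)
  (fun U => (U \subset ~: A) && (#|U| <= s)%N)) /=; last first.
  move=> S; rewrite /draws !inE => /andP[/andP[_ /eqP <-] _].
  by rewrite -(cardsID A S) leq_addl setDE subsetIr.
apply: eq_bigr => U /andP[UA Us]; rewrite sum1dep_card.
rewrite -(card_in_imset (f := fun S => S :&: A)); last first.
  move=> S1 S2; rewrite !inE => /andP[_ /eqP S1U] /andP[_ /eqP S2U] eqI.
  by rewrite -(setID S1 A) -(setID S2 A) eqI S1U S2U.
apply: eq_card => V; apply/imsetP/idP => [[S + ->]|].
  rewrite /draws !inE => /andP[/andP[/andP[_ /eqP sizeS] GSA] /eqP <-].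
  by rewrite subsetIr GSA -sizeS -(cardsID A S) addnK eqxx.
rewrite /draws !inE => /andP[/andP[VA /eqP sizeV] GV].
have UA0 : U :&: A = set0 by apply/disjoint_setI0; rewrite disjoints_subset.
have VUA : (V :|: U) :&: A = V by rewrite setIUl UA0 setU0; apply/setIidPl.
have VUD : (V :|: U) :\: A = U.
  have VA0 : V :\: A = set0 by apply/eqP; rewrite setD_eq0.
  by rewrite setDUl VA0 set0U; apply/setDidPl; rewrite disjoints_subset.
exists (V :|: U) => //; rewrite !inE VUA VUD GV subsetT eqxx andbT /=.
by rewrite -(cardsID A) VUA VUD sizeV subnK ?andbT.
Qed.

Lemma uprob_draws_setI_le (A : {set T}) s (F : pred {set T}) (d : R) : 0 <= d ->
  (forall k, uprob R (draws A k) F <= d) ->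
  uprob R (draws [set: T] s) (fun S => F (S :&: A)) <= d.
Proof.
move=> d_ge0 restricted; apply/uprob_leP => //; rewrite card_draws_setI.
have -> : draws [set: T] s = [set S in draws [set: T] s | predT (S :&: A)].
  by apply/setP => S; rewrite !inE andbT.
rewrite card_draws_setI !natr_sum mulr_sumr; apply: ler_sum => U _.
have -> : [set S in draws A (s - #|U|) | predT S] = draws A (s - #|U|).
  by apply/setP => S; rewrite !inE andbT.
exact/uprob_leP.
Qed.

Lemma pair_probE s s' (E : {set T} -> {set T} -> bool) :
  pair_prob R s s' E =
  uprob R (setX (draws [set: T] s) (draws [set: T] s')) (fun q => E q.1 q.2).
Proof.
rewrite /pair_prob /uprob; congr (_%:R / _%:R); apply: eq_card => q;
by rewrite /draws !inE !subsetT ?andbA.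
Qed.

End Sampling.

Section PopulationMean.
Variables (R : realFieldType) (T : finType).
Implicit Types (P : {set T}) (f g : T -> R).

Lemma ler_pop_mean P f g : {in P, forall x, f x <= g x} -> pop_mean P f <= pop_mean P g.
Proof. by move=> fg; rewrite ler_wpM2r ?invr_ge0 ?ler0n //; apply: ler_sum. Qed.

Lemma pop_mean_ge0 P f : {in P, forall x, 0 <= f x} -> 0 <= pop_mean P f.
Proof. by move=> f_ge0; rewrite divr_ge0 ?ler0n //; apply: sumr_ge0. Qed.

Lemma pop_meanB P f g : pop_mean P f - pop_mean P g = pop_mean P (fun x => f x - g x).
Proof. by rewrite /pop_mean sumrB mulrBl. Qed.

Lemma indic_ge0_le1 (A : {set T}) x : 0 <= indic R A x <= 1.
Proof. by rewrite /indic; case: (x \in A); rewrite ?lexx ?ler01. Qed.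

Lemma sum_indicM (A : {set T}) f :
  \sum_(x in [set: T]) indic R A x * f x = \sum_(x in A) f x.
Proof.
rewrite (big_setID A) /= setTI [X in _ + X]big1 ?addr0 => [|x].
  by apply: eq_bigr => x Ax; rewrite /indic Ax mul1r.
by rewrite !inE /indic => /andP[/negPf ->]; rewrite mul0r.
Qed.

Lemma pop_mean_indic (A : {set T}) :
  pop_mean [set: T] (indic R A) = #|A|%:R / #|T|%:R.
Proof.
rewrite /pop_mean cardsT; congr (_ / _).
by rewrite -sumr_const -(sum_indicM A); apply: eq_bigr => x _; rewrite mulr1.
Qed.

(* Holds even for empty [A], where both sides vanish. *)
Lemma pop_mean_indicM (A : {set T}) f :
  pop_mean [set: T] (indic R A) * pop_mean A f =
  pop_mean [set: T] (fun x => indic R A x * f x).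
Proof.
rewrite pop_mean_indic {2}/pop_mean cardsT sum_indicM /pop_mean.
have [A0|A_gt0] := posnP #|A|.
  by rewrite A0 !mul0r (eqP (_ : A == set0)) ?big_set0 ?mul0r // -cards_eq0 A0.
by rewrite mulrC mulrA divfK // pnatr_eq0 -lt0n.
Qed.

End PopulationMean.

Lemma ler_wdivrMr (R : realFieldType) (x y z : R) :
  0 <= y -> 0 <= z -> x <= y * z -> x / z <= y.
Proof.
move=> y_ge0; rewrite le_eqVlt => /predU1P[<- _|z_gt0]; last by rewrite ler_pdivrMr.
by rewrite invr0 mulr0.
Qed.

Section Precision.
Variables (R : realFieldType) (X Y : finType).
Implicit Types (M MH Mh : {set X * Y}).

Lemma pfrac_ge0 M A x : 0 <= pfrac R M A x.
Proof. by rewrite divr_ge0 ?ler0n. Qed.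

Lemma pfrac_le1 M A x : pfrac R M A x <= 1.
Proof.
rewrite /pfrac; have [->|A_gt0] := posnP #|msec A x|; first by rewrite invr0 mulr0 ler01.
by rewrite ler_pdivrMr ?ltr0n // mul1r ler_nat subset_leq_card // subsetIl.
Qed.

Lemma indic_pfracB_dp_le M MH Mh x :
  indic R (matched MH) x * pfrac R M MH x - dp R Mh MH x <=
  indic R (matched Mh) x * pfrac R M Mh x.
Proof.
have := pfrac_ge0 M MH x; have := pfrac_le1 M MH x.
have := pfrac_ge0 M Mh x; have := pfrac_le1 M Mh x.
have : 0 <= #|msec MH x :\: msec Mh x|%:R / #|msec Mh x|%:R :> R by rewrite divr_ge0 ?ler0n.
rewrite /dp /indic !inE.
case: (msec MH x != set0); case: (msec Mh x != set0);
  case: eqP => [sameMx|] /=; rewrite ?mulr1n ?mulr0n ?mulr1 ?mulr0; try lra.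
by rewrite /pfrac sameMx; lra.
Qed.

Lemma precision_ge0 M Mh : 0 <= precision R M Mh.
Proof. by apply: pop_mean_ge0 => x _; apply: pfrac_ge0. Qed.

Lemma precision_mean_ge M MH Mh :
  pop_mean [set: X] (indic R (matched MH)) * pop_mean (matched MH) (pfrac R M MH)
    - pop_mean [set: X] (dp R Mh MH)
  <= pop_mean [set: X] (indic R (matched Mh)) * precision R M Mh.
Proof.
rewrite !pop_mean_indicM pop_meanB; apply: ler_pop_mean => x _.
exact: indic_pfracB_dp_le.
Qed.

Lemma precision_ge_estimate M MH Mh (l1 l2 u3 u4 : R) :
  0 <= l1 -> 0 <= l2 ->
  l1 <= pop_mean [set: X] (indic R (matched MH)) ->
  ((0 < #|matched MH|)%N -> l2 <= pop_mean (matched MH) (pfrac R M MH)) ->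
  pop_mean [set: X] (dp R Mh MH) <= u3 ->
  pop_mean [set: X] (indic R (matched Mh)) <= u4 ->
  (l1 * l2 - u3) / u4 <= precision R M Mh.
Proof.
move=> l1_ge0 l2_ge0 le1 le2 le3 le4.
have le12 : l1 * l2 <= pop_mean [set: X] (indic R (matched MH))
                       * pop_mean (matched MH) (pfrac R M MH).
  have [MH0|MH_gt0] := posnP #|matched MH|; last by rewrite ler_pM ?le2.
  have l1_0 : l1 = 0 by move: le1; rewrite pop_mean_indic MH0 mul0r; lra.
  by rewrite l1_0 pop_mean_indic MH0 !mul0r.
have mean4_ge0 : 0 <= pop_mean [set: X] (indic R (matched Mh)).
  by apply: pop_mean_ge0 => x _; case/andP: (indic_ge0_le1 R (matched Mh) x).
apply: ler_wdivrMr; [exact: precision_ge0 | exact: le_trans le4 |].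
apply: le_trans (lerB le12 le3) _; apply: le_trans (precision_mean_ge M MH Mh) _.
by rewrite mulrC ler_wpM2l ?precision_ge0.
Qed.

End Precision.

Section BoundRules.
Variables (R : realFieldType) (T : finType) (pplus pminus : rule_t R T) (delta : R).
Hypotheses (Hplus : upper_rule pplus) (Hminus : lower_rule pminus) (delta_gt0 : 0 < delta).

(* Draws of a size exceeding [#|P|] do not exist, so the rule extends to every [k]. *)
Lemma lower_rule_uprob_le (P : {set T}) k (f : T -> R) (a b : R) :
  (0 < #|P|)%N -> {in P, forall x, a <= f x <= b} ->
  uprob R (draws P k) (fun S => pop_mean P f < pminus P S f a b delta) <= delta.
Proof.
move=> P_gt0 f_range; have [k_le|k_gt] := leqP k #|P|.
  by rewrite -samp_probE; apply: Hminus.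
rewrite uprob_eq0 ?ltW // => S; rewrite /draws inE => /andP[/subset_leq_card S_le /eqP S_k].
by move: k_gt; rewrite -S_k ltnNge S_le.
Qed.

Lemma lower_rule_setI_le (J : finType) (D2 : {set J}) s (A : {set T})
    (f : T -> R) (a b : R) :
  D2 != set0 -> {in A, forall x, a <= f x <= b} ->
  uprob R (setX (draws [set: T] s) D2) (fun q =>
    (0 < #|A|)%N && (pop_mean A f < pminus A (q.1 :&: A) f a b delta)) <= delta.
Proof.
move=> D2_neq0 f_range.
pose F (S : {set T}) := (0 < #|A|)%N && (pop_mean A f < pminus A S f a b delta).
rewrite (uprob_setX_fst R _ (fun S => F (S :&: A))) //.
apply: (@uprob_draws_setI_le R T A s F) => [|k]; first exact: ltW.
have [A0|A_gt0] := posnP #|A|; first by rewrite uprob_eq0 ?ltW // => S _; rewrite /F A0.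
by rewrite /F A_gt0; apply: lower_rule_uprob_le.
Qed.

Variables (I : finType) (D1 : {set I}) (k : nat).
Hypotheses (T_gt0 : (0 < #|T|)%N) (k_le : (k <= #|T|)%N).

Lemma lower_rule_setX_le (f : I -> T -> R) (a b : R) :
  (forall i, i \in D1 -> forall x, a <= f i x <= b) ->
  uprob R (setX D1 (draws [set: T] k)) (fun q =>
    pop_mean [set: T] (f q.1) < pminus [set: T] q.2 (f q.1) a b delta) <= delta.
Proof.
move=> f_range.
apply: (uprob_setX_le
  (E := fun i S' => pop_mean [set: T] (f i) < pminus [set: T] S' (f i) a b delta)).
  exact: ltW.
by move=> i iD1; rewrite -samp_probE; apply: Hminus; rewrite ?cardsT // => x _; apply: f_range.
Qed.

Lemma upper_rule_setX_le (f : I -> T -> R) (a b : R) :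
  (forall i, i \in D1 -> forall x, a <= f i x <= b) ->
  uprob R (setX D1 (draws [set: T] k)) (fun q =>
    pplus [set: T] q.2 (f q.1) a b delta < pop_mean [set: T] (f q.1)) <= delta.
Proof.
move=> f_range.
apply: (uprob_setX_le
  (E := fun i S' => pplus [set: T] S' (f i) a b delta < pop_mean [set: T] (f i))).
  exact: ltW.
by move=> i iD1; rewrite -samp_probE; apply: Hplus; rewrite ?cardsT // => x _; apply: f_range.
Qed.

End BoundRules.

Theorem theorem6 (R : realFieldType) (X Y : finType)
    (pplus pminus : rule_t R X)
    (Hplus : upper_rule pplus) (Hminus : lower_rule pminus)
    (Hminus_ge : lower_rule_ge_a pminus)
    (M MH : {set X * Y}) (Mhat : {set X} -> {set X * Y})
    (s s' : nat) (delta : R) :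
  (0 < #|X|)%N -> (s <= #|X|)%N -> (s' <= #|X|)%N ->
  (forall S : {set X}, #|S| = s -> forall x : X,
      -1 <= dp R (Mhat S) MH x <= 2) ->
  0 < delta ->
  1 - 4 * delta <=
  pair_prob R s s' (fun S S' =>
    (pminus [set: X] S' (indic R (matched MH)) 0 1 delta
       * pminus (matched MH) (S :&: matched MH) (pfrac R M MH) 0 1 delta
     - pplus [set: X] S' (dp R (Mhat S) MH) (-1) 2 delta)
    / pplus [set: X] S' (indic R (matched (Mhat S))) 0 1 delta
    <= precision R M (Mhat S)).
Proof.
move=> X_gt0 s_le s'_le dp_range delta_gt0; set A := matched MH.
rewrite pair_probE; set D := setX _ _.
have draws_s' := draws_setT_neq0 s'_le.
have D_neq0 : D != set0 by rewrite -card_gt0 cardsX muln_gt0 !card_gt0 draws_setT_neq0.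
have dp_range_draws S : S \in draws [set: X] s -> forall x, -1 <= dp R (Mhat S) MH x <= 2.
  by rewrite /draws inE subsetT => /eqP; apply: dp_range.
have bad_indicH := lower_rule_setX_le Hminus delta_gt0 (D1 := draws [set: X] s) X_gt0 s'_le
  (f := fun _ => indic R A) (fun _ _ x => indic_ge0_le1 R A x).
have pH_range : {in A, forall x, 0 <= pfrac R M MH x <= 1}.
  by move=> x _; rewrite pfrac_ge0 pfrac_le1.
have bad_pH := lower_rule_setI_le Hminus delta_gt0 s draws_s' pH_range.
have bad_dp := upper_rule_setX_le Hplus delta_gt0 (D1 := draws [set: X] s) X_gt0 s'_le
  (f := fun S => dp R (Mhat S) MH) dp_range_draws.
have bad_indic := upper_rule_setX_le Hplus delta_gt0 (D1 := draws [set: X] s) X_gt0 s'_le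
  (f := fun S => indic R (matched (Mhat S))) (fun _ _ x => indic_ge0_le1 R _ x).
apply: (le_trans _ (uprob_union_bound R (Es := [:: _; _; _; _]) D_neq0 _)) => [|q _].
  rewrite !big_cons big_nil addr0.
  apply: le_trans _ (lerB (lexx 1) (lerD bad_indicH (lerD bad_pH (lerD bad_dp bad_indic)))).
  lra.
apply: contraR; rewrite /= orbF !negb_or negb_and -!leNgt => /and4P[le1 le2 le3 le4].
apply: (precision_ge_estimate (MH := MH)) => //; try by apply: Hminus_ge; rewrite ler01.
by move=> A_gt0; move: le2; rewrite A_gt0.
Qed.
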